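(* There is an absolute constant $C>0$ such that for every $\varepsilon\in(0,1/3]$ and every integer $d\ge\log_2(1/\varepsilon)$, there exist an integer $k\le d$ and a monotone function $f:\{\pm1\}^k\to\{\pm1\}$ such that, for $\mathbf x$ uniform on $\{\pm1\}^k$, $$\min_{b\in\{\pm1\}}\Pr[f(\mathbf x)=b]\ge\varepsilon$$ and $$\mathbb E[\mathbf x_1f(\mathbf x)]=\cdots=\mathbb E[\mathbf x_kf(\mathbf x)]\le C\,\varepsilon\log(1/\varepsilon)\cdot\frac{\log d}{d}.$$
   Context: A function $f:\{\pm1\}^k\to\{\pm1\}$ is monotone if $f(x)\le f(y)$ whenever $x_i\le y_i$ for all $i$. *)

From HB Require Import structures.
From mathcomp Require Import all_boot all_order all_algebra.
From mathcomp Require Import all_classical all_reals all_analysis.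
Set Implicit Arguments. Unset Strict Implicit. Unset Printing Implicit Defensive.
Import Order.TTheory GRing.Theory Num.Theory.
Local Open Scope ring_scope.

(* The cube {±1}^k is encoded as {ffun 'I_k -> bool}, with true = +1 and
   false = -1; f : cube k -> bool encodes a {±1}-valued function. *)
Definition cube (k : nat) := {ffun 'I_k -> bool}.

Definition pm {R : ringType} (b : bool) : R := if b then 1 else -1.

Definition monotone_bf (k : nat) (f : cube k -> bool) : Prop :=
  forall x y : cube k, (forall i, x i ==> y i) -> f x ==> f y.

Definition prob_eq {R : realType} (k : nat) (f : cube k -> bool) (b : bool) : R :=
  #|[set x : cube k | f x == b]|%:R / 2 ^+ k.

Definition corr {R : realType} (k : nat) (f : cube k -> bool) (i : 'I_k) : R :=
  (\sum_(x : cube k) pm (x i) * pm (f x)) / 2 ^+ k.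

From HB Require Import structures.
From mathcomp Require Import all_boot all_order all_algebra.
From mathcomp Require Import all_classical all_reals all_analysis.
From mathcomp Require Import ring lra.
Set Implicit Arguments. Unset Strict Implicit. Unset Printing Implicit Defensive.
Import Order.TTheory GRing.Theory Num.Theory.
Local Open Scope ring_scope.

(* The witness is the tribes function: an OR of m = 2^j disjoint ANDs of
   width w = j + s.  It equals -1 with probability (1 - 2^-w)^m, which
   Bernoulli's inequality pins between 1 - m 2^-w and 1/(1 + m 2^-w); with
   m 2^-w = 2^-s and 1/(3 eps) < 2^s <= 2/(3 eps), both values have
   probability at least eps.  A coordinate matters only when its block-mates
   are all true and every other block fails, so for every i
   E[x_i f] = 2^(1-w) (1 - 2^-w)^(m-1) <= 2 / (2^s m) = O(eps / m).
   Taking m maximal subject to m w <= d makes m of order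
   d / (log d + log (1/eps)). *)

Lemma card_cube k : #|{: cube k}| = (2 ^ k)%N.
Proof. by rewrite card_ffun card_bool card_ord. Qed.

Lemma sum_nat_indicator (R : nzRingType) (X : finType) (P : pred X) :
  \sum_x ((P x)%:R : R) = #|[set x | P x]|%:R.
Proof.
rewrite -sum1_card natr_sum [RHS]big_mkcond /=; apply: eq_bigr => x _.
by rewrite inE; case: (P x).
Qed.

Lemma sum_pm_indicator (R : nzRingType) (X : finType) (g h : pred X) :
  \sum_x pm (g x) * ((h x)%:R : R) =
  #|[set x | g x && h x]|%:R - #|[set x | ~~ g x && h x]|%:R.
Proof.
rewrite -!sum_nat_indicator -sumrB; apply: eq_bigr => x _.
by rewrite /pm; case: (g x); case: (h x);
  rewrite ?mul1r ?mulN1r ?mulr0 ?subr0 ?sub0r ?oppr0.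
Qed.

Section Cube.
Variable k : nat.

Definition flip_coord (i : 'I_k) (x : cube k) : cube k :=
  [ffun j => if j == i then ~~ x j else x j].

Lemma flip_coordK i : involutive (flip_coord i).
Proof.
by move=> x; apply/ffunP => j; rewrite !ffunE; case: eqP; rewrite ?negbK.
Qed.

Lemma card_coord_false i :
  #|[set x : cube k | ~~ x i]| = #|[set x : cube k | x i]|.
Proof.
have -> : [set x : cube k | ~~ x i] = flip_coord i @^-1: [set x : cube k | x i].
  by apply/setP => x; rewrite !inE ffunE eqxx.
by apply: on_card_preimset; exists (flip_coord i) => x _; rewrite flip_coordK.
Qed.

Lemma prob_eq_negb (R : realType) (f : cube k -> bool) b :
  prob_eq (R:=R) f (~~ b) = 1 - prob_eq f b.
Proof.
have card_sum : (#|[set x | f x == b]| + #|[set x | f x == ~~ b]|)%N = (2 ^ k)%N.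
  rewrite -card_cube -(cardsC [set x | f x == b]); congr (_ + _)%N.
  by apply: eq_card => x; rewrite !inE; case: (f x); case: b.
rewrite /prob_eq -(addKn #|[set x | f x == b]| #|[set x | f x == ~~ b]|) card_sum.
rewrite natrB ?natrX; last by rewrite -card_sum leq_addr.
by rewrite mulrBl divff // expf_neq0 // pnatr_eq0.
Qed.

Lemma corrE (R : realType) (f : cube k -> bool) i :
  corr (R:=R) f i = 2 * (#|[set x : cube k | ~~ x i && ~~ f x]|%:R
                         - #|[set x : cube k | x i && ~~ f x]|%:R) / 2 ^+ k.
Proof.
have pmE x : pm (f x) = ((predT x)%:R : R) - 2 * (~~ f x)%:R.
  by rewrite /pm; case: (f x) => /=; lra.
rewrite /corr; congr (_ / _).
under eq_bigr => x _ do rewrite pmE mulrBr mulrCA.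
rewrite sumrB -mulr_sumr !sum_pm_indicator.
have predTE (P : pred (cube k)) : [set x | P x && predT x] = [set x | P x].
  by apply/setP => x; rewrite !inE andbT.
rewrite !predTE card_coord_false subrr sub0r.
by rewrite -mulrN opprB.
Qed.
End Cube.

Section Tribes.
Variables m w : nat.

Definition blocks (x : cube (m * w)) : {ffun 'I_m -> cube w} :=
  [ffun a => [ffun b => x (mxvec_index a b)]].

Lemma blocksE x a b : blocks x a b = x (mxvec_index a b).
Proof. by rewrite !ffunE. Qed.

Lemma blocks_bij : bijective blocks.
Proof.
apply: inj_card_bij; last by rewrite card_ffun !card_cube card_ord -expnM mulnC.
move=> x y /ffunP eq_xy; apply/ffunP => k; case/mxvec_indexP: k => a b.
by rewrite -!blocksE eq_xy.
Qed.

Lemma card_blocks_family (F : 'I_m -> pred (cube w)) :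
  #|[set x | blocks x \in family F]| = (\prod_a #|F a|)%N.
Proof.
have -> : [set x | blocks x \in family F] = blocks @^-1: [set Y | Y \in family F].
  by apply/setP => x; rewrite !inE.
rewrite (on_card_preimset (onW_bij _ blocks_bij)) cardsE card_family.
by rewrite foldrE big_map big_enum.
Qed.

Definition tribes (x : cube (m * w)) : bool := [exists a, [forall b, blocks x a b]].

Definition not_all_true : pred (cube w) := [pred z : cube w | ~~ [forall b, z b]].

Lemma tribesN x : ~~ tribes x = (blocks x \in family (fun => not_all_true)).
Proof. by rewrite negb_exists; apply/forallP/familyP => all_a a; apply: all_a. Qed.

Lemma tribes_monotone : monotone_bf tribes.
Proof.
move=> x y le_xy; apply/implyP => /existsP [a /forallP xa]; apply/existsP.
exists a; apply/forallP => b; rewrite blocksE.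
by apply: (implyP (le_xy _)); rewrite -blocksE.
Qed.

Lemma all_trueE (z : cube w) : [forall b, z b] = (z == [ffun=> true]).
Proof.
apply/forallP/eqP => [z1|-> b]; last by rewrite ffunE.
by apply/ffunP => b; rewrite ffunE z1.
Qed.

Lemma card_not_all_true : (#|not_all_true| + 1 = 2 ^ w)%N.
Proof.
have -> : #|not_all_true| = #|predC1 ([ffun=> true] : cube w)|.
  by apply: eq_card => z; rewrite !inE all_trueE.
by rewrite cardC1 card_cube addn1 prednK // expn_gt0.
Qed.

Lemma card_coord_not_all_true b :
  #|[set z : cube w | ~~ z b && not_all_true z]| =
  (#|[set z : cube w | z b && not_all_true z]| + 1)%N.
Proof.
have -> : [set z : cube w | ~~ z b && not_all_true z] = [set z : cube w | ~~ z b].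
  apply/setP => z; rewrite !inE andb_idr // => zbN.
  by apply/forallP => /(_ b); apply/negP.
rewrite card_coord_false -(cardsID [set [ffun=> true]] [set z : cube w | z b]) addnC.
congr (_ + _)%N.
  by apply: eq_card => z; rewrite !inE /not_all_true /= all_trueE andbC.
have -> : [set z : cube w | z b] :&: [set [ffun=> true]] = [set [ffun=> true]].
  by apply/setP => z; rewrite !inE andb_idl // => /eqP ->; rewrite ffunE.
exact: cards1.
Qed.

Lemma card_coord_tribesN (c : bool -> bool) a0 b0 :
  #|[set x : cube (m * w) | c (x (mxvec_index a0 b0)) && ~~ tribes x]| =
  (#|[set z : cube w | c (z b0) && not_all_true z]| * #|not_all_true| ^ m.-1)%N.
Proof.
pose F : 'I_m -> pred (cube w) := fun a =>
  if a == a0 then fun z : cube w => c (z b0) && not_all_true z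
  else not_all_true.
have -> : [set x : cube (m * w) | c (x (mxvec_index a0 b0)) && ~~ tribes x] =
          [set x | blocks x \in family F].
  apply/setP => x; rewrite !inE tribesN -blocksE; apply/andP/familyP.
    move=> [cx /familyP all_a] a; rewrite /F; case: eqP => [->|_]; last exact: all_a.
    by rewrite unfold_in /= cx; apply: all_a.
  move=> all_a; have := all_a a0; rewrite /F eqxx unfold_in /= => /andP [c_x _].
  split => //; apply/familyP => a; have := all_a a; rewrite /F.
  by case: eqP => [-> /andP []|].
rewrite card_blocks_family (bigD1 a0) //= {1}/F eqxx cardsE.
congr (_ * _)%N; rewrite (eq_bigr (fun => #|not_all_true|)) => [|a /negbTE a_a0].
  by rewrite prod_nat_const cardC1 card_ord.
by rewrite /F a_a0.
Qed.

Lemma corr_tribes (R : realType) i :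
  corr (R:=R) tribes i = 2 * (#|not_all_true| ^ m.-1)%:R / 2 ^+ (m * w).
Proof.
case/mxvec_indexP: i => a0 b0.
rewrite corrE (card_coord_tribesN negb) (card_coord_tribesN (fun b => b)).
rewrite card_coord_not_all_true; congr (_ * _ / _).
by rewrite !natrM natrD; ring.
Qed.

Lemma prob_tribes_false (R : realType) :
  prob_eq (R:=R) tribes false = (1 - (2 ^+ w)^-1) ^+ m.
Proof.
rewrite /prob_eq.
have -> : [set x | tribes x == false] =
          [set x | blocks x \in family (fun => not_all_true)].
  by apply: eq_finset => x; rewrite -tribesN; case: (tribes x).
have card_ntrue : #|not_all_true|%:R = 2 ^+ w - 1 :> R.
  by rewrite -natrX -card_not_all_true natrD addrK.
rewrite card_blocks_family prod_nat_const card_ord natrX card_ntrue.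
by rewrite mulnC exprM -expr_div_n mulrBl divff ?div1r // expf_neq0 // pnatr_eq0.
Qed.

Lemma corr_tribes_le (R : realType) i : corr (R:=R) tribes i <= 2 / 2 ^+ w.
Proof.
have m_gt0 : (0 < m)%N by case: m i => [[]|].
have pow_gt0 : 0 < (2 : R) ^+ w by rewrite exprn_gt0.
have le_ntrue : (#|not_all_true| ^ m.-1)%:R <= (2 ^+ w) ^+ m.-1 :> R.
  rewrite natrX lerXn2r ?nnegrE ?exprn_ge0 // -natrX ler_nat.
  by rewrite -card_not_all_true leq_addr.
rewrite corr_tribes mulnC exprM.
have -> : (2 : R) ^+ w ^+ m = 2 ^+ w * 2 ^+ w ^+ m.-1 by rewrite -exprS prednK.
rewrite invfM mulrACA ler_piMr ?divr_ge0 // ler_pdivrMr ?mul1r // exprn_gt0 //.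
Qed.
End Tribes.

Lemma bernoulli_ineq (R : realDomainType) (x : R) n :
  0 <= x <= 1 -> 1 - n%:R * x <= (1 - x) ^+ n.
Proof.
move=> /andP [x_ge0 x_le1]; elim: n => [|n IHn]; first by rewrite mul0r subr0.
have : 0 <= (1 - x) * ((1 - x) ^+ n - (1 - n%:R * x)) by apply: mulr_ge0; lra.
have : 0 <= n%:R * x * x by rewrite !mulr_ge0.
by rewrite exprS -natr1; nra.
Qed.

Lemma onemXn_mul1D_le1 (R : realDomainType) (x : R) n :
  0 <= x <= 1 -> (1 - x) ^+ n * (1 + n%:R * x) <= 1.
Proof.
move=> /andP [x_ge0 x_le1]; elim: n => [|n IHn]; first by rewrite mul0r addr0 mulr1.
have : 0 <= (1 - x) ^+ n by rewrite exprn_ge0 // subr_ge0.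
have : 0 <= (n%:R + 1) * x * x by rewrite !mulr_ge0 // addr_ge0.
by rewrite exprS -natr1; nra.
Qed.

Lemma balanced_onemXn (R : realFieldType) (eps p u : R) n :
  0 <= p <= 1 -> n%:R * p = u^-1 -> 2 <= u -> 3 * eps * u <= 2 ->
  eps <= (1 - p) ^+ n /\ eps <= 1 - (1 - p) ^+ n.
Proof.
move=> p01 np u_ge2 eps_le.
have := bernoulli_ineq n p01; have := onemXn_mul1D_le1 n p01; rewrite np.
have uV_u : u^-1 * u = 1 by rewrite mulVf // gt_eqF // (lt_le_trans _ u_ge2).
have : 0 < u^-1 by rewrite invr_gt0 (lt_le_trans _ u_ge2).
have : 0 <= (1 - p) ^+ n by rewrite exprn_ge0 // subr_ge0; case/andP: p01.
split; nra.
Qed.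

Lemma ex_crossing (P : pred nat) a b :
  (a <= b)%N -> P a -> ~~ P b -> exists2 n, (a <= n)%N & P n && ~~ P n.+1.
Proof.
elim: b => [|b IHb]; first by rewrite leqn0 => /eqP -> ->.
rewrite leq_eqVlt => /orP [/eqP -> -> //|a_le_b Pa NPb1].
by case: (boolP (P b)) => [Pb|NPb]; [exists b; rewrite ?Pb | apply: IHb].
Qed.

Lemma ln_exp2 (R : realType) n : ln (2 ^+ n : R) = n%:R * ln 2.
Proof. by rewrite lnXn // mulr_natl. Qed.

Lemma exponents_le_ln_prod (R : realType) (eps : R) (s j d : nat) :
  (0 < s)%N -> 2 ^+ s <= eps^-1 -> (2 <= d)%N -> (2 ^ j <= d)%N ->
  (j%:R + 1 + s%:R) * ln 2 ^+ 2 <= 3 * ln eps^-1 * ln d%:R.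
Proof.
set l := ln (2 : R); set A := ln eps^-1; set B := ln d%:R.
move=> s_gt0 u_le d_ge2 J_le.
have l_gt0 : 0 < l by rewrite ln_gt0 // ltr1n.
have u_ge2 : 2 <= 2 ^+ s :> R by rewrite -[X in X <= _]expr1 ler_eXn2l ?ltr1n.
have d_gt0 : (0 < d)%N by apply: leq_trans d_ge2.
have l_le_A : l <= A by rewrite ler_ln ?posrE; lra.
have l_le_B : l <= B by rewrite ler_ln ?posrE ?ler_nat ?ltr0n.
have jl_le : j%:R * l <= B.
  by rewrite -ln_exp2 ler_ln ?posrE ?exprn_gt0 ?ltr0n // -natrX ler_nat.
have sl_le : s%:R * l <= A by rewrite -ln_exp2 ler_ln ?posrE ?exprn_gt0 //; lra.
have : 0 <= j%:R * l by rewrite mulr_ge0 // ltW.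
have : 0 <= s%:R * l by rewrite mulr_ge0 // ltW.
rewrite expr2; nra.
Qed.

Lemma exp2_inv_le_rate (R : realType) (eps : R) (s j d : nat) :
  0 < eps -> (0 < s)%N -> 1 < 3 * eps * 2 ^+ s <= 2 -> (2 <= d)%N ->
  (2 ^ j * (j + s) <= d)%N -> (d < 2 ^ j.+1 * (j.+1 + s))%N ->
  2 / 2 ^+ (j + s) <= 36 / ln 2 ^+ 2 * eps * ln eps^-1 * (ln d%:R / d%:R).
Proof.
move=> eps_gt0 s_gt0 /andP [eps_u eps_u_le] d_ge2 Pj d_lt.
have u_le : 2 ^+ s <= eps^-1.
  have : eps^-1 * eps = 1 by rewrite mulVf // gt_eqF.
  nra.
have J_le : (2 ^ j <= d)%N.
  by apply: leq_trans Pj; rewrite leq_pmulr // addn_gt0 s_gt0 orbT.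
have key := exponents_le_ln_prod s_gt0 u_le d_ge2 J_le.
set l := ln (2 : R) in key *; set A := ln eps^-1 in key *.
set B := ln d%:R in key *; set J : R := 2 ^+ j; set u : R := 2 ^+ s in eps_u *.
have l_gt0 : 0 < l by rewrite ln_gt0 // ltr1n.
have l2_gt0 : 0 < l ^+ 2 by rewrite exprn_gt0.
have dR_gt0 : 0 < d%:R :> R by rewrite ltr0n (leq_trans _ d_ge2).
have J_gt0 : 0 < J by rewrite exprn_gt0.
have u_gt0 : 0 < u by rewrite exprn_gt0.
have dR_lt : d%:R < 2 * J * (j%:R + 1 + s%:R).
  by move: d_lt; rewrite -(ltr_nat R) natrM natrX exprS (natrD _ j.+1 s) -[j.+1%:R]natr1.
have JAB_ge0 : 0 <= J * (A * B).
  have : 0 <= (j%:R + 1 + s%:R) * l ^+ 2 by rewrite mulr_ge0 // ltW.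
  by move=> pos; apply: mulr_ge0; [exact: ltW | lra].
rewrite exprD -/J -/u ler_pdivrMr ?mulr_gt0 //.
have -> : 36 / l ^+ 2 * eps * A * (B / d%:R) * (J * u) =
          (36 * eps * u * J * (A * B)) / (l ^+ 2 * d%:R).
  by field; rewrite !gt_eqF.
rewrite ler_pdivlMr ?mulr_gt0 //.
have := ler_wpM2l (ltW l2_gt0) (ltW dR_lt).
have := ler_wpM2l (ltW J_gt0) key.
have := ler_wpM2l JAB_ge0 (ltW eps_u).
lra.
Qed.

Lemma prob_tribes_ge (R : realType) (eps : R) j s b :
  (0 < s)%N -> 3 * eps * 2 ^+ s <= 2 ->
  eps <= prob_eq (R:=R) (@tribes (2 ^ j) (j + s)) b.
Proof.
move=> s_gt0 eps_le.
have p01 : 0 <= (2 ^+ (j + s) : R)^-1 <= 1.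
  by rewrite invr_ge0 exprn_ge0 //= invf_le1 ?exprn_gt0 ?exprn_ege1 ?ler1n.
have np : (2 ^ j)%:R * (2 ^+ (j + s))^-1 = (2 ^+ s)^-1 :> R.
  by rewrite natrX exprD invfM mulrA mulfV ?mul1r // expf_neq0.
have u_ge2 : 2 <= 2 ^+ s :> R by rewrite -[X in X <= _]expr1 ler_eXn2l ?ltr1n.
have [lo hi] := balanced_onemXn p01 np u_ge2 eps_le.
by case: b; rewrite -?[true]/(~~ false) ?prob_eq_negb prob_tribes_false.
Qed.

Lemma tribes_scales (R : realType) (eps : R) d :
  0 < eps -> eps <= 3^-1 -> eps^-1 <= 2 ^+ d ->
  exists s j, [/\ (2 <= d)%N, (0 < s)%N, 1 < 3 * eps * 2 ^+ s <= 2,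
                  (2 ^ j * (j + s) <= d)%N & (d < 2 ^ j.+1 * (j.+1 + s))%N].
Proof.
move=> eps_gt0 eps_le epsV_le.
have epsV_ge3 : 3 <= eps^-1 by rewrite -[3]invrK lef_pV2 ?posrE ?invr_gt0.
have epsV_eps : eps^-1 * eps = 1 by rewrite mulVf // gt_eqF.
have d_ge2 : (2 <= d)%N.
  have : (3 <= 2 ^ d)%N by rewrite -(ler_nat R) natrX; lra.
  by case: (d) => [|[|]].
have [s s_gt0 /andP [Ps NPs]] : exists2 s, (1 <= s)%N &
    (3 * eps * 2 ^+ s <= 2) && ~~ (3 * eps * 2 ^+ s.+1 <= 2).
  by apply: ex_crossing (ltnW d_ge2) _ _; rewrite ?expr1 -?ltNge; nra.
have eps_u : 1 < 3 * eps * 2 ^+ s by move: NPs; rewrite exprS -ltNge; lra.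
have s_le_d : (s <= d)%N by rewrite -(ler_eXn2l (ltr1n R 2)); nra.
have [j _ /andP [Pj NPj]] : exists2 j, (0 <= j)%N &
    (2 ^ j * (j + s) <= d)%N && ~~ (2 ^ j.+1 * (j.+1 + s) <= d)%N.
  apply: ex_crossing (leq0n d) _ _; rewrite ?mul1n // -ltnNge.
  by rewrite (leq_trans (ltn_expl d (ltnSn 1))) // leq_pmulr // addn_gt0 s_gt0 orbT.
by exists s, j; split; rewrite ?eps_u // ltnNge.
Qed.

Theorem proposition4p5 (R : realType) :
  exists C : R, 0 < C /\
  forall (eps : R), 0 < eps -> eps <= 3^-1 ->
  forall d : nat, ln (eps^-1) / ln 2 <= d%:R ->
  exists k : nat, (k <= d)%N /\
  exists f : cube k -> bool,
    monotone_bf f /\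
    (forall b : bool, eps <= prob_eq f b) /\
    (forall i j : 'I_k, corr (R:=R) f i = corr (R:=R) f j) /\
    (forall i : 'I_k, corr f i <= C * eps * ln (eps^-1) * (ln d%:R / d%:R)).
Proof.
have ln2_gt0 : 0 < ln (2 : R) by rewrite ln_gt0 // ltr1n.
exists (36 / ln 2 ^+ 2); split; first by rewrite divr_gt0 ?exprn_gt0.
move=> eps eps_gt0 eps_le d d_ge.
have epsV_le : eps^-1 <= 2 ^+ d.
  by rewrite -ler_ln ?posrE ?invr_gt0 ?exprn_gt0 // ln_exp2 -ler_pdivrMr.
have [s [j [d_ge2 s_gt0 eps_u Pj d_lt]]] := tribes_scales eps_gt0 eps_le epsV_le.
exists (2 ^ j * (j + s))%N; split => //.
exists (@tribes (2 ^ j) (j + s)); split; first exact: tribes_monotone.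
split; first by move=> b; apply: prob_tribes_ge => //; case/andP: eps_u.
split; first by move=> i i'; rewrite !corr_tribes.
by move=> i; apply: le_trans (corr_tribes_le R i) (exp2_inv_le_rate _ _ _ _ _ _).
Qed.
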